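(* Let $P<G$ be finite groups and $U,V$ irreducible $\mathbb{F}G$-modules such that: (i) $\dim\mathrm{End}_P(U)\geq2$ and $\dim\mathrm{End}_P(V)\geq2$; (ii) the module $W:=(1_P){\uparrow}^G$ is either a direct sum $1_G\oplus A$ or a uniserial module with composition factors $1_G,A,1_G$, where $A\not\cong1_G$. Then $U\otimes V$ is reducible.
   Context: $\mathbb{F}$ is an algebraically closed field; $1_X$ denotes the trivial module of a group $X$. *)

From HB Require Import structures.
From mathcomp Require Import all_boot all_order all_algebra all_fingroup all_solvable.
From mathcomp Require Import all_field all_character.
From mathcomp Require Import mxtens.

Set Implicit Arguments.
Unset Strict Implicit.
Unset Printing Implicit Defensive.

Import GRing.Theory.
Local Open Scope ring_scope.

Section Defs.

Variable F : fieldType.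
Variable gT : finGroupType.

Lemma triv_mx_repr (G : {group gT}) : mx_repr G (fun _ : gT => (1%:M : 'M[F]_1)).
Proof. by split=> // x y _ _; rewrite mulmx1. Qed.
Definition triv_repr (G : {group gT}) := MxRepresentation (triv_mx_repr G).

Section Tensor.
Variables (G : {group gT}) (m n : nat).
Variables (rU : mx_representation F G m) (rV : mx_representation F G n).
Lemma tens_mx_repr : mx_repr G (fun g => rU g *t rV g).
Proof.
split=> [|x y Gx Gy].
  rewrite !repr_mx1; apply/matrixP=> i j.
  case: (mxtens_indexP i)=> i0 i1; case: (mxtens_indexP j)=> j0 j1.
  rewrite tensmxE !mxE (inj_eq (can_inj (@mxtens_indexK _ _))) xpair_eqE.
  by case: (i0 == j0); case: (i1 == j1); rewrite /= ?mulr1 ?mulr0.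
by rewrite tensmx_mul !repr_mxM.
Qed.
Definition tens_repr := MxRepresentation tens_mx_repr.
End Tensor.

Section DSum.
Variables (G : {group gT}) (m n : nat).
Variables (rU : mx_representation F G m) (rV : mx_representation F G n).
Lemma dsum_mx_repr :
  mx_repr G (fun g => block_mx (rU g) 0 0 (rV g) : 'M[F]_(m + n)).
Proof.
split=> [|x y Gx Gy]; first by rewrite !repr_mx1 -scalar_mx_block.
by rewrite mulmx_block !mulmx0 !mul0mx !addr0 !add0r !repr_mxM.
Qed.
Definition dsum_repr := MxRepresentation dsum_mx_repr.
End DSum.

(* The induced module (1_P)^G, realized as the permutation module on the
   right cosets of P in G. *)
Section Induced.
Variables (P G : {group gT}).
Hypothesis sPG : P \subset G.

Local Notation C := (rcosets P G).
Local Notation N := #|C|.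

Definition coset_mx (g : gT) : 'M[F]_N :=
  \matrix_(i < N, j < N) ((enum_val i :* g)%g == enum_val j)%:R.

Lemma coset_mx_repr : mx_repr G coset_mx.
Proof.
split=> [|x y Gx Gy].
  apply/matrixP=> i j; rewrite !mxE rcoset1.
  by rewrite (inj_eq enum_val_inj).
apply/matrixP=> i j; rewrite !mxE.
have Ci : enum_val i \in C by apply: enum_valP.
have Cix : (enum_val i :* x)%g \in C.
  case/rcosetsP: Ci => z Gz ->; apply/rcosetsP; exists (z * x)%g.
    by rewrite groupM.
  by rewrite rcosetM.
rewrite (bigD1 (enum_rank_in Cix (enum_val i :* x)%g)) //= !mxE enum_rankK_in //.
rewrite eqxx mul1r big1 ?addr0.
  by rewrite rcosetM.
move=> k nk; rewrite !mxE.
case: eqP => [e|]; last by rewrite mul0r.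
by case/eqP: nk; apply: enum_val_inj; rewrite enum_rankK_in //; apply/esym/eqP.
Qed.
Definition induced_triv_repr := MxRepresentation coset_mx_repr.
End Induced.

(* dim End_P(U) for an FG-module U and P a subgroup of G: the dimension of the
   centralizer of the enveloping algebra of the restriction U|_P. *)
Definition dim_End_res (G P : {group gT}) n (rU : mx_representation F G n)
  (sPG : P \subset G) : nat :=
  \rank 'C(enveloping_algebra_mx (subg_repr rU sPG))%MS.

Definition mx_uniserial (G : {group gT}) n (rW : mx_representation F G n) :=
  forall U V : 'M[F]_n, mxmodule rW U -> mxmodule rW V ->
    (U <= V)%MS \/ (V <= U)%MS.

End Defs.

From HB Require Import structures.
From mathcomp Require Import all_boot all_order all_algebra all_fingroup all_solvable.
From mathcomp Require Import all_field all_character.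
From mathcomp Require Import mxtens.
From Stdlib Require Import Lia.
From mathcomp Require Import zify.

Set Implicit Arguments.
Unset Strict Implicit.
Unset Printing Implicit Defensive.

Import GRing.Theory.
Local Open Scope ring_scope.

(* A non-scalar Z in End_P(U) corresponds, by Frobenius reciprocity, to a
   G-map phi_U from W = (1_P)^G to End(U) sending the coset P r to r^-1 Z r.
   By Schur's lemma the image of the sum of all cosets is scalar, and ker phi_U
   does not contain the augmentation submodule (else all the r^-1 Z r agree,
   so Z is central, hence scalar).  If U (x) V were irreducible, Schur applied
   to sum_r r^-1 Z_U r (x) r^-1 Z_V r would force phi_V^T phi_U into the
   scalars, so ker phi_V meets the augmentation submodule.  When W = 1_G + A
   this puts the whole augmentation submodule in ker phi_V; when W is
   uniserial both kernels must be its socle 1_G, and the pairing condition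
   then bounds dim W by 3, making A one-dimensional with trivial action. *)

Lemma sub_of_trmx_muls (F : fieldType) l k p q r (X : 'M[F]_(l, k))
    (B : 'M[F]_(l, p)) (C : 'M[F]_(l, q)) (v : 'M[F]_(r, k)) :
  (B^T *m X <= v)%MS -> (C^T *m X <= v)%MS ->
  (forall x : 'rV[F]_l, x *m B = 0 -> x *m C = 0 -> x = 0) ->
  (X <= v)%MS.
Proof.
move=> sBX sCX BC_inj.
have sBCX : (col_mx B^T C^T *m X <= v)%MS by rewrite mul_col_mx col_mx_sub sBX.
have free_BC : row_free (row_mx B C).
  rewrite -kermx_eq0 -submx0; apply/row_subP=> i.
  have /sub_kermxP := row_sub i (kermx (row_mx B C)).
  rewrite mul_mx_row -row_mx0 => /eq_row_mx[Bi Ci].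
  by rewrite (BC_inj _ Bi Ci) sub0mx.
have full_BC : row_full (col_mx B^T C^T).
  by move: free_BC; rewrite /row_full -mxrank_tr tr_col_mx !trmxK.
by rewrite -[X]mul1mx (submx_trans _ sBCX) // submxMr // sub1mx.
Qed.

Lemma gram_mxvec_sub_scalar (F : fieldType) l m n
    (X : 'I_l -> 'M[F]_m) (Y : 'I_l -> 'M[F]_n) (t : F) :
  (forall a a' b b',
     \sum_i X i a a' * Y i b b' = t * ((a == a') && (b == b'))%:R) ->
  ((\matrix_i mxvec (Y i))^T *m (\matrix_i mxvec (X i))
     <= mxvec (1%:M : 'M[F]_m))%MS.
Proof.
move=> XY_scalar; apply/row_subP=> q; case/mxvec_indexP: q => b b'.
rewrite (_ : row _ _ = (t * (b == b')%:R) *: mxvec 1%:M) ?scalemx_sub //.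
apply/rowP=> p; case/mxvec_indexP: p => a a'.
rewrite !mxE mxvecE mxE.
under eq_bigr => i _ do rewrite !mxE !mxvecE mulrC.
by rewrite XY_scalar andbC -mulrA -natrM mulnb.
Qed.

Section InducedTrivial.

Variables (F : fieldType) (gT : finGroupType) (G P : {group gT}).
Hypothesis sPG : P \subset G.

Local Notation N := #|rcosets P G|.
Local Notation W := (induced_triv_repr F P G).

Definition rcoset_of (i : 'I_N) : {set gT} := enum_val i.
Definition rcoset_rep (i : 'I_N) : gT := repr (rcoset_of i).

Lemma rcoset_of_inj : injective rcoset_of.
Proof. exact: enum_val_inj. Qed.

Lemma rcoset_ofE i : rcoset_of i = (P :* rcoset_rep i)%g.
Proof.
have /rcosetsP[x _ Ex] : rcoset_of i \in rcosets P G by apply: enum_valP.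
by rewrite /rcoset_rep Ex rcoset_repr.
Qed.

Lemma rcoset_rep_in i : rcoset_rep i \in G.
Proof.
have /rcosetsP[x Gx Ex] : rcoset_of i \in rcosets P G by apply: enum_valP.
rewrite /rcoset_rep Ex; case: repr_rcosetP => p Pp.
by rewrite groupM // (subsetP sPG).
Qed.

(* The default [i] is only reached when [g \notin G]. *)
Definition rcoset_act (g : gT) (i : 'I_N) : 'I_N :=
  odflt i [pick j | rcoset_of j == (rcoset_of i :* g)%g].

Lemma rcoset_actE g i : g \in G ->
  rcoset_of (rcoset_act g i) = (rcoset_of i :* g)%g.
Proof.
move=> Gg; rewrite /rcoset_act; case: pickP => [j /eqP //|none].
have Cig : (rcoset_of i :* g)%g \in rcosets P G.
  rewrite rcoset_ofE -rcosetM; apply/rcosetsP.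
  by exists (rcoset_rep i * g)%g; rewrite ?groupM ?rcoset_rep_in.
have := none (enum_rank_in Cig (rcoset_of i :* g)%g).
by rewrite /rcoset_of enum_rankK_in // eqxx.
Qed.

Lemma rcoset_act_inj g : g \in G -> injective (rcoset_act g).
Proof.
move=> Gg i j /(congr1 rcoset_of); rewrite !rcoset_actE //.
move/(congr1 (fun A => A :* g^-1)%g); rewrite -!rcosetM mulgV !rcoset1.
exact: rcoset_of_inj.
Qed.

Lemma rcoset_act_transitive i j : exists2 g, g \in G & rcoset_act g i = j.
Proof.
have Gi := rcoset_rep_in i; have Gj := rcoset_rep_in j.
exists ((rcoset_rep i)^-1 * rcoset_rep j)%g; first by rewrite groupM ?groupV.
apply: rcoset_of_inj; rewrite rcoset_actE ?groupM ?groupV //.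
by rewrite rcoset_ofE -rcosetM mulgA mulgV mul1g -rcoset_ofE.
Qed.

Lemma induced_triv_mxE g i j : g \in G -> W g i j = (rcoset_act g i == j)%:R.
Proof.
move=> Gg; rewrite /= /coset_mx mxE -/(rcoset_of i) -/(rcoset_of j).
by rewrite -rcoset_actE // (inj_eq rcoset_of_inj).
Qed.

Lemma row_induced_triv_mx g i : g \in G ->
  row i (W g) = delta_mx 0 (rcoset_act g i).
Proof.
move=> Gg; apply/rowP=> j; have := induced_triv_mxE i j Gg.
by rewrite !mxE => ->; rewrite eq_sym.
Qed.

Lemma rcosets_gt0 : (0 < N)%N.
Proof. by apply/card_gt0P; exists (P :* 1)%g; apply/rcosetsP; exists 1%g. Qed.

Local Notation i0 := (Ordinal rcosets_gt0).
Local Notation one_cv := (const_mx 1 : 'cV[F]_N).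

Definition aug_mx : 'M[F]_N := kermx one_cv.

Lemma induced_triv_mx_one g : g \in G -> W g *m one_cv = one_cv.
Proof.
move=> Gg; apply/colP=> i; rewrite mxE (bigD1 (rcoset_act g i)) //=.
rewrite induced_triv_mxE // eqxx !mxE mul1r big1 ?addr0 // => j nj.
by rewrite induced_triv_mxE // eq_sym (negbTE nj) mul0r.
Qed.

Lemma one_induced_triv_mx g : g \in G -> one_cv^T *m W g = one_cv^T.
Proof.
move=> Gg; apply/rowP=> j; rewrite mxE.
transitivity (\sum_i ((i == j)%:R : F)).
  rewrite [RHS](reindex_inj (rcoset_act_inj Gg)) /=; apply: eq_bigr => i _.
  by rewrite induced_triv_mxE // !mxE mul1r.
by rewrite (bigD1 j) //= eqxx big1 ?addr0 ?mxE // => i /negbTE ->.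
Qed.

Lemma fixed_cv_const (c : 'cV[F]_N) :
  (forall g, g \in G -> W g *m c = c) -> c = c i0 0 *: one_cv.
Proof.
move=> fix_c; apply/colP=> j; rewrite !mxE mulr1.
have [g Gg <-] := rcoset_act_transitive j i0.
have /colP/(_ j) := fix_c g Gg; rewrite mxE (bigD1 (rcoset_act g j)) //=.
rewrite induced_triv_mxE // eqxx mul1r big1 ?addr0 // => l nl.
by rewrite induced_triv_mxE // eq_sym (negbTE nl) mul0r.
Qed.

Lemma aug_module : mxmodule W aug_mx.
Proof.
apply/mxmoduleP=> g Gg; apply/sub_kermxP.
by rewrite -mulmxA induced_triv_mx_one // mulmx_ker.
Qed.

Lemma one_module : mxmodule W one_cv^T.
Proof. by apply/mxmoduleP=> g Gg; rewrite one_induced_triv_mx. Qed.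

Lemma rank_one_cv : \rank one_cv^T = 1%N.
Proof.
apply/eqP; rewrite mxrank_tr eqn_leq rank_leq_col lt0n mxrank_eq0.
apply/negP=> /eqP/colP/(_ i0); rewrite !mxE => /eqP.
by rewrite oner_eq0.
Qed.

Lemma rank_aug : \rank aug_mx = N.-1.
Proof. by rewrite mxrank_ker -mxrank_tr rank_one_cv subn1. Qed.

Lemma sub_aug m (x : 'M[F]_(m, N)) : (x <= aug_mx)%MS = (x *m one_cv == 0).
Proof. by apply/sub_kermxP/eqP. Qed.

Lemma induced_triv_mx_diff_aug m (x : 'M[F]_(m, N)) g : g \in G ->
  (x *m W g - x <= aug_mx)%MS.
Proof.
by move=> Gg; rewrite sub_aug mulmxBl -mulmxA induced_triv_mx_one // subrr.
Qed.

Section CosetConjugates.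

Variables (k : nat) (rho : mx_representation F G k).

Definition res_cent (Z : 'M[F]_k) := forall p, p \in P -> Z *m rho p = rho p *m Z.

Definition coset_conj (Z : 'M[F]_k) i :=
  rho (rcoset_rep i)^-1%g *m Z *m rho (rcoset_rep i).

(* The G-map W -> End(U) attached to Z in End_P(U) by Frobenius reciprocity. *)
Definition conj_hom (Z : 'M[F]_k) : 'M[F]_(N, k * k) :=
  \matrix_i mxvec (coset_conj Z i).

Lemma coset_conj_act Z g i : res_cent Z -> g \in G ->
  coset_conj Z (rcoset_act g i) = rho g^-1%g *m coset_conj Z i *m rho g.
Proof.
move=> cZ Gg; have Gi := rcoset_rep_in i.
have : rcoset_rep (rcoset_act g i) \in (P :* (rcoset_rep i * g))%g.
  by rewrite rcosetM -rcoset_ofE -rcoset_actE // rcoset_ofE rcoset_refl.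
rewrite /coset_conj; case/rcosetP=> p Pp ->; have Gp := subsetP sPG p Pp.
rewrite !invMg !repr_mxM ?groupM ?groupV //.
rewrite !mulmxA -(mulmxA _ Z (rho p)) cZ // mulmxA.
rewrite -(mulmxA _ (rho p^-1%g) (rho p)) -(repr_mxM rho (groupVr Gp) Gp).
by rewrite mulVg repr_mx1 mulmx1.
Qed.

Lemma sum_rcoset_cent (H : 'I_N -> 'M[F]_k) :
  (forall g i, g \in G -> H (rcoset_act g i) = rho g^-1%g *m H i *m rho g) ->
  centgmx rho (\sum_i H i).
Proof.
move=> H_act; apply/centgmxP=> g Gg.
rewrite mulmx_suml mulmx_sumr [in RHS](reindex_inj (rcoset_act_inj Gg)) /=.
apply: eq_bigr => i _; rewrite H_act // !mulmxA -(repr_mxM _ Gg (groupVr Gg)).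
by rewrite mulgV repr_mx1 mul1mx.
Qed.

Lemma is_scalar_coset_conj Z i : is_scalar_mx (coset_conj Z i) -> is_scalar_mx Z.
Proof.
case/is_scalar_mxP=> a Ea; apply/is_scalar_mxP; exists a.
have Gi := rcoset_rep_in i; have Gi' := groupVr Gi.
have <- : rho (rcoset_rep i) *m coset_conj Z i *m rho (rcoset_rep i)^-1%g = Z.
  rewrite /coset_conj !mulmxA -(repr_mxM _ Gi Gi') mulgV repr_mx1 mul1mx.
  by rewrite repr_mxK.
by rewrite Ea scalar_mxC -mulmxA -(repr_mxM _ Gi Gi') mulgV repr_mx1 mulmx1.
Qed.

Lemma conj_hom_act Z g (w : 'rV[F]_N) : res_cent Z -> g \in G ->
  w *m W g *m conj_hom Z =
    mxvec (rho g^-1%g *m vec_mx (w *m conj_hom Z) *m rho g).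
Proof.
move=> cZ Gg.
pose L := lin_mx (mulmx (rho g^-1%g)) *m lin_mx (mulmxr (rho g)).
have vecL (X : 'M[F]_k) : mxvec X *m L = mxvec (rho g^-1%g *m X *m rho g).
  by rewrite mulmxA !mul_vec_lin.
rewrite -mulmxA; have -> : W g *m conj_hom Z = conj_hom Z *m L.
  apply/row_matrixP=> i.
  by rewrite !row_mul row_induced_triv_mx // -rowE !rowK vecL coset_conj_act.
by rewrite mulmxA -{1}[w *m conj_hom Z]vec_mxK vecL.
Qed.

Lemma ker_conj_hom_module Z : res_cent Z -> mxmodule W (kermx (conj_hom Z)).
Proof.
move=> cZ; apply/mxmoduleP=> g Gg; apply/row_subP=> i; apply/sub_kermxP.
rewrite row_mul conj_hom_act //; move/sub_kermxP: (row_sub i (kermx (conj_hom Z))).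
by move=> ->; rewrite linear0 mulmx0 mul0mx linear0.
Qed.

Lemma one_conj_hom Z : one_cv^T *m conj_hom Z = mxvec (\sum_i coset_conj Z i).
Proof.
rewrite mulmx_sum_row linear_sum; apply: eq_bigr => i _.
by rewrite !mxE scale1r rowK.
Qed.

Lemma exists_nonscalar_res_cent : (1 < dim_End_res rho sPG)%N ->
  exists2 Z, res_cent Z & ~~ is_scalar_mx Z.
Proof.
case/(has_non_scalar_mxP (scalar_mx_cent _ _)) => Z cZ nsZ; exists Z => //.
by move=> p Pp; move: cZ; rewrite memmx_cent_envelop => /centgmxP/(_ p Pp).
Qed.

End CosetConjugates.

(* The augmentation submodule projects isomorphically onto the irreducible A. *)
Lemma split_aug_sub_module a (rA : mx_representation F G a) (K : 'M[F]_N)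
    (x : 'rV[F]_N) :
  mx_irreducible rA -> mx_rsim W (dsum_repr (triv_repr F G) rA) ->
  mxmodule W K -> x != 0 -> (x <= K)%MS -> (x <= aug_mx)%MS ->
  (aug_mx <= K)%MS.
Proof.
move=> irrA [B rankW freeB homB] modK nzx xK xS.
pose projA : 'M[F]_(1 + a, a) := col_mx 0 1%:M.
pose fixB := B *m col_mx (1%:M : 'M_1) 0.
have /fixed_cv_const fixBE : forall g, g \in G -> W g *m fixB = fixB.
  move=> g Gg; rewrite /fixB mulmxA homB //= -mulmxA mul_block_col.
  by rewrite !mulmx0 mulmx1 mul0mx addr0 add0r.
have BA_inj (w : 'rV[F]_N) :
    w *m (B *m projA) = 0 -> (w <= aug_mx)%MS -> w = 0.
  move=> wA0; rewrite sub_aug => /eqP w1.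
  have w_fix0 : w *m fixB = 0 by rewrite fixBE -scalemxAr w1 scaler0.
  move: wA0 w_fix0; rewrite /fixB !mulmxA -[w *m B]hsubmxK !mul_row_col.
  rewrite !mulmx0 !mulmx1 add0r addr0 => wA0 w_fix0.
  apply: (row_free_inj freeB); rewrite mul0mx -[w *m B]hsubmxK.
  by rewrite wA0 w_fix0 row_mx0.
pose X := (K :&: aug_mx)%MS.
have modX : mxmodule W X by apply: capmx_module => //; apply: aug_module.
have modXA : mxmodule rA (X *m (B *m projA)).
  apply/mxmoduleP=> g Gg.
  have -> : X *m (B *m projA) *m rA g = X *m W g *m (B *m projA).
    rewrite -!mulmxA; congr (_ *m _); rewrite [RHS]mulmxA homB // -mulmxA.
    congr (_ *m _); rewrite /= /projA mul_block_col mul_col_mx.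
    by rewrite !mulmx0 !mul0mx !mulmx1 !mul1mx addr0 add0r.
  by rewrite submxMr // (mxmoduleP modX).
have xX : (x <= X)%MS by rewrite sub_capmx xK.
have nzXA : X *m (B *m projA) != 0.
  apply: contraNneq nzx => XA0; apply/eqP; apply: BA_inj xS.
  by have := submxMr (B *m projA) xX; rewrite XA0; apply: submx0null.
have rank_XA : \rank (X *m (B *m projA)) = a.
  apply/eqP; rewrite -genmxE; apply: ((mx_irrP rA).1 irrA).2.
    by rewrite (eqmx_module _ (genmxE _)).
  by rewrite -mxrank_eq0 genmxE mxrank_eq0.
have ker_XA : \rank (X :&: kermx (B *m projA))%MS = 0%N.
  apply/eqP; rewrite mxrank_eq0 -submx0; apply/row_subP=> i.
  have Xi := row_sub i (X :&: kermx (B *m projA))%MS.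
  rewrite submx0; apply/eqP; apply: BA_inj.
    by apply/sub_kermxP; apply: submx_trans Xi (capmxSr _ _).
  exact: submx_trans Xi (submx_trans (capmxSl _ _) (capmxSr _ _)).
have rankX := mxrank_mul_ker X (B *m projA).
rewrite rank_XA ker_XA addn0 in rankX.
have sXaug : (X <= aug_mx)%MS by apply: capmxSr.
have : (aug_mx <= X)%MS by rewrite -(mxrank_leqif_sup sXaug) rank_aug -rankX rankW.
by move/submx_trans; apply; apply: capmxSl.
Qed.

Section Uniserial.

Variables (a : nat) (rA : mx_representation F G a).
Hypotheses (irrA : mx_irreducible rA) (ntA : ~ mx_rsim rA (triv_repr F G)).
Hypothesis uniW : mx_uniserial W.
Variables (M1 M2 : 'M[F]_N) (mod1 : mxmodule W M1) (mod2 : mxmodule W M2).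
Hypothesis sM12 : (M1 <= M2)%MS.
Hypotheses (triv1 : mx_rsim (submod_repr mod1) (triv_repr F G))
           (simA : mx_rsim (section_repr mod1 mod2) rA)
           (triv2 : mx_rsim (factmod_repr mod2) (triv_repr F G)).

Lemma rank_M1 : \rank M1 = 1%N.
Proof. exact: mxrank_rsim triv1. Qed.

Lemma rank_M2 : \rank M2 = N.-1.
Proof.
have := mxrank_rsim triv2; rewrite mxrank_coker.
by have := rank_leq_row M2; have := rcosets_gt0; lia.
Qed.

Lemma uniserial_dim : a = N.-2.
Proof.
have := mxrank_rsim simA; rewrite genmxE => <-.
have := mxrank_in_factmod M1 M2; rewrite (addsmx_idPr sM12) rank_M2 rank_M1.
lia.
Qed.

Lemma uniserial_eq_rank_sub m1 m2 (A : 'M[F]_(m1, N)) (B : 'M[F]_(m2, N)) :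
  mxmodule W A -> mxmodule W B -> \rank A = \rank B -> (B <= A)%MS.
Proof.
move=> modA modB rankAB.
have modA' : mxmodule W <<A>>%MS by rewrite (eqmx_module _ (genmxE A)).
have modB' : mxmodule W <<B>>%MS by rewrite (eqmx_module _ (genmxE B)).
case: (uniW modA' modB'); rewrite !genmxE // => sAB.
by rewrite -(mxrank_leqif_sup sAB) rankAB.
Qed.

Lemma M2_aug : (M2 == aug_mx)%MS.
Proof.
by apply/andP; split; apply: uniserial_eq_rank_sub;
  rewrite ?rank_aug ?rank_M2 //; apply: aug_module.
Qed.

Lemma M1_one : (M1 == one_cv^T)%MS.
Proof.
by apply/andP; split; apply: uniserial_eq_rank_sub;
  rewrite ?rank_one_cv ?rank_M1 //; apply: one_module.
Qed.

Lemma small_submod_one (K : 'M[F]_N) (x : 'rV[F]_N) : mxmodule W K ->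
  ~~ (aug_mx <= K)%MS -> x != 0 -> (x <= K)%MS -> (K == one_cv^T)%MS.
Proof.
move=> modK naugK nzx xK.
have augM2 : (aug_mx <= M2)%MS by case/andP: M2_aug.
have nM2K : ~~ (M2 <= K)%MS by apply: contra naugK; apply: submx_trans augM2.
have KM2 : (K <= M2)%MS by case: (uniW modK mod2) => // M2K; rewrite M2K in nM2K.
have KM1 : (K <= M1)%MS.
  case: (uniW modK mod1) => // M1K; apply/negPn/negP=> nKM1.
  have [_ noK] : max_submod W M1 M2.
    apply/(max_submodP mod1 mod2 sM12).
    exact: mx_rsim_irr (mx_rsim_sym simA) irrA.
  by apply: (noK K); split; rewrite // ltmxE ?M1K ?KM2.
have rankK : \rank K = 1%N.
  apply/eqP; rewrite eqn_leq -{1}rank_M1 mxrankS //= lt0n mxrank_eq0.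
  by apply: contraNneq nzx => K0; move: xK; rewrite K0 => /submx0null ->.
have /eqmxP eqKM1 : (K == M1)%MS by rewrite -(mxrank_leqif_eq KM1) rankK rank_M1.
by apply/eqmxP; apply: eqmx_trans eqKM1 (eqmxP M1_one).
Qed.

Lemma section_not_trivial :
  (forall g, g \in G -> forall s : 'rV[F]_N,
     (s <= M2)%MS -> (s *m W g - s <= M1)%MS) ->
  a != 1%N.
Proof.
move=> trivG; apply/eqP=> a1.
have trivS g : g \in G -> section_repr mod1 mod2 g = 1%:M.
  move=> Gg; apply: (@val_submod_inj _ _ _ _ _ _ _).
  rewrite -[section_repr mod1 mod2 g]mul1mx.
  rewrite (val_submodJ (section_module mod1 mod2)) //.
  apply/row_matrixP=> i; rewrite row_mul.
  have : (row i (val_submod (1%:M : 'M_(\rank <<in_factmod M1 M2>>%MS)))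
            <= in_factmod M1 M2)%MS.
    apply: submx_trans (row_sub _ _) (submx_trans (val_submodP _) _).
    by rewrite genmxE.
  case/submxP=> y ->; rewrite in_factmodE mulmxA -in_factmodE.
  rewrite -in_factmodJ //; apply/eqP; rewrite -subr_eq0 -linearB /=.
  by rewrite in_factmod_eq0 trivG // submxMl.
have trivA g : g \in G -> rA g = 1%:M.
  by move=> Gg; apply: (mx_rsim_scalar Gg simA); rewrite trivS.
apply: ntA; exists (const_mx 1 : 'M[F]_(a, 1)) => //.
  rewrite /row_free eqn_leq rank_leq_row a1 lt0n mxrank_eq0.
  apply/negP=> /eqP/matrixP/(_ 0 0); rewrite !mxE => /eqP.
  by rewrite oner_eq0.
by move=> g Gg; rewrite trivA // mul1mx /= mulmx1.
Qed.

(* The kernel of [MV] forces its row space to be the whole augmentation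
   submodule, whose image under [conj_hom Z] then has rank at most 1; so
   N <= 3, and G acts trivially on the one-dimensional M2 / M1. *)
Lemma uniserial_scalar_pairing_false k (rho : mx_representation F G k)
    (Z : 'M[F]_k) p (MV : 'M[F]_(N, p)) :
  res_cent rho Z ->
  (MV^T *m conj_hom rho Z <= mxvec (1%:M : 'M[F]_k))%MS ->
  (kermx MV == one_cv^T)%MS -> (kermx (conj_hom rho Z) == one_cv^T)%MS ->
  False.
Proof.
move=> cZ pairing /eqmxP kerV /eqmxP kerU.
set MU := conj_hom rho Z in pairing kerU *.
have MV_aug : (MV^T <= aug_mx)%MS.
  rewrite sub_aug -[one_cv]trmxK -trmx_mul; apply/eqP.
  have /sub_kermxP -> : (one_cv^T <= kermx MV)%MS by rewrite kerV.
  exact: trmx0.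
have rank_MV : \rank MV^T = N.-1.
  rewrite mxrank_tr; have := mxrank_ker MV; rewrite kerV rank_one_cv.
  by have := rank_leq_row MV; have := rcosets_gt0; lia.
have aug_MV : (aug_mx <= MV^T)%MS.
  by rewrite -(mxrank_leqif_sup MV_aug) rank_aug rank_MV.
have augU : (aug_mx *m MU <= mxvec (1%:M : 'M[F]_k))%MS.
  exact: submx_trans (submxMr MU aug_MV) pairing.
have rank_augU := mxrankS augU.
have rank_one := rank_leq_row (mxvec (1%:M : 'M[F]_k)).
have rank_cap : (\rank (aug_mx :&: kermx MU)%MS <= 1)%N.
  by rewrite -rank_one_cv -kerU mxrankS // capmxSr.
have rank_sum := mxrank_mul_ker aug_mx MU; rewrite rank_aug in rank_sum.
have a_gt0 : (0 < a)%N by case/mx_irrP: irrA.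
have a1 : a = 1%N by have := uniserial_dim; lia.
move/eqP: a1; apply/negP; apply: section_not_trivial => g Gg s sM2.
have /is_scalar_mxP[d sU] : is_scalar_mx (vec_mx (s *m MU)).
  rewrite -memmx1 vec_mxK (submx_trans _ augU) // submxMr //.
  by rewrite (submx_trans sM2) //; case/andP: M2_aug.
rewrite (eqmxP M1_one) -kerU; apply/sub_kermxP.
rewrite mulmxBl conj_hom_act // sU scalar_mxC -mulmxA.
by rewrite -(repr_mxM _ (groupVr Gg) Gg) mulVg repr_mx1 mulmx1 -sU vec_mxK subrr.
Qed.

End Uniserial.
End InducedTrivial.

Section ClosedField.

Variables (F : closedFieldType) (gT : finGroupType) (G P : {group gT}).
Hypothesis sPG : P \subset G.

Local Notation N := #|rcosets P G|.
Local Notation W := (induced_triv_repr F P G).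
Local Notation one_cv := (const_mx 1 : 'cV[F]_N).
Local Notation aug_mx := (@aug_mx F gT G P).

Section Irreducible.

Variables (k : nat) (rho : mx_representation F G k).
Hypothesis irr : mx_irreducible rho.

Local Notation res_cent := (res_cent P rho).
Local Notation conj_hom := (conj_hom P rho).

Lemma irr_cent_scalar A : centgmx rho A -> is_scalar_mx A.
Proof. exact/mx_abs_irr_cent_scalar/group_closure_closed_field. Qed.

Lemma one_conj_hom_scalar Z : res_cent Z ->
  (one_cv^T *m conj_hom Z <= mxvec (1%:M : 'M_k))%MS.
Proof.
move=> cZ; rewrite one_conj_hom memmx1; apply: irr_cent_scalar.
by apply: (sum_rcoset_cent sPG) => g i Gg; apply: coset_conj_act.
Qed.

Lemma aug_not_sub_ker_conj_hom Z : res_cent Z -> ~~ is_scalar_mx Z ->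
  ~~ (aug_mx <= kermx (conj_hom Z))%MS.
Proof.
move=> cZ nsZ; apply/negP=> aug_ker; case/negP: nsZ.
pose i0 := Ordinal (rcosets_gt0 G P); pose d : 'rV[F]_N := delta_mx 0 i0.
apply: (is_scalar_coset_conj sPG (rho := rho) (i := i0)); apply: irr_cent_scalar.
apply/centgmxP=> g Gg.
have /sub_kermxP : (d *m W g - d <= kermx (conj_hom Z))%MS.
  exact: submx_trans (induced_triv_mx_diff_aug sPG _ Gg) aug_ker.
rewrite mulmxBl conj_hom_act // -rowE rowK mxvecK => /eqP.
rewrite subr_eq0 => /eqP/(can_inj (@mxvecK _ _ _)) conj_fixed.
rewrite -[in RHS]conj_fixed !mulmxA -(repr_mxM _ Gg (groupVr Gg)).
by rewrite mulgV repr_mx1 mul1mx.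
Qed.

Lemma ker_meets_aug Z p (MV : 'M[F]_(N, p)) : res_cent Z -> ~~ is_scalar_mx Z ->
  (MV^T *m conj_hom Z <= mxvec (1%:M : 'M[F]_k))%MS ->
  exists2 x : 'rV[F]_N, x != 0 & (x <= kermx MV)%MS && (x <= aug_mx)%MS.
Proof.
move=> cZ nsZ pairing.
have [cap0|nz_cap] := eqVneq (kermx MV :&: aug_mx)%MS 0; last first.
  exists (nz_row (kermx MV :&: aug_mx)%MS); first by rewrite nz_row_eq0.
  by rewrite -sub_capmx nz_row_sub.
have hom_scalar : (conj_hom Z <= mxvec (1%:M : 'M[F]_k))%MS.
  apply: (sub_of_trmx_muls pairing (one_conj_hom_scalar cZ)) => x xV x1.
  apply/eqP; rewrite -submx0 -cap0 sub_capmx sub_aug x1 eqxx andbT.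
  exact/sub_kermxP.
case/negP: nsZ; pose i0 := Ordinal (rcosets_gt0 G P).
apply: (is_scalar_coset_conj sPG (rho := rho) (i := i0)).
by rewrite -memmx1 -(rowK (fun i => mxvec (coset_conj rho Z i)) i0)
  (submx_trans (row_sub _ _) hom_scalar).
Qed.

End Irreducible.

Section Tensor.

Variables (m n : nat) (rU : mx_representation F G m) (rV : mx_representation F G n).
Variables (ZU : 'M[F]_m) (ZV : 'M[F]_n).
Hypotheses (cU : res_cent P rU ZU) (cV : res_cent P rV ZV).
Hypothesis irrUV : mx_irreducible (tens_repr rU rV).

Local Notation XU := (coset_conj rU ZU).
Local Notation XV := (coset_conj rV ZV).

Lemma tens_coset_conj_scalar : exists t : F, forall a a' b b',
  \sum_(i < N) XU i a a' * XV i b b' = t * ((a == a') && (b == b'))%:R.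
Proof.
have /(irr_cent_scalar irrUV)/is_scalar_mxP[t sumE] :
    centgmx (tens_repr rU rV) (\sum_(i < N) (XU i *t XV i)).
  apply: (sum_rcoset_cent sPG) => g i Gg /=.
  by rewrite !coset_conj_act // !tensmx_mul.
exists t => a a' b b'.
move/matrixP/(_ (mxtens_index (a, b)) (mxtens_index (a', b'))): sumE.
rewrite summxE; under eq_bigr => i _ do rewrite tensmxE.
move=> ->; rewrite mxE (inj_eq (can_inj (@mxtens_indexK _ _))) xpair_eqE.
by rewrite mulr_natr.
Qed.

Lemma tens_irr_pairing_scalar :
  ((conj_hom P rV ZV)^T *m conj_hom P rU ZU <= mxvec (1%:M : 'M[F]_m))%MS /\
  ((conj_hom P rU ZU)^T *m conj_hom P rV ZV <= mxvec (1%:M : 'M[F]_n))%MS.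
Proof.
have [t sumE] := tens_coset_conj_scalar.
split; apply: (gram_mxvec_sub_scalar (t := t)) => // b b' a a'.
by under eq_bigr => i _ do rewrite mulrC; rewrite sumE andbC.
Qed.

End Tensor.

End ClosedField.

Local Close Scope ring_scope.
Unset Implicit Arguments.
Set Strict Implicit.

Theorem lemma8p5 (F : closedFieldType) (gT : finGroupType) (G P : {group gT})
  (ltPG : P \proper G)
  (m n : nat) (rU : mx_representation F G m) (rV : mx_representation F G n)
  (irrU : mx_irreducible rU) (irrV : mx_irreducible rV)
  (EndU : 2 <= dim_End_res rU (proper_sub ltPG))
  (EndV : 2 <= dim_End_res rV (proper_sub ltPG))
  (hW : exists (a : nat) (rA : mx_representation F G a),
      [/\ mx_irreducible rA,
          ~ mx_rsim rA (triv_repr F G) &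
          mx_rsim (induced_triv_repr F P G) (dsum_repr (triv_repr F G) rA)
          \/ (mx_uniserial (induced_triv_repr F P G) /\
              exists (M1 M2 : 'M[F]_#|rcosets P G|)
                     (mod1 : mxmodule (induced_triv_repr F P G) M1)
                     (mod2 : mxmodule (induced_triv_repr F P G) M2),
                [/\ (M1 <= M2)%MS,
                    mx_rsim (submod_repr mod1) (triv_repr F G),
                    mx_rsim (section_repr mod1 mod2) rA &
                    mx_rsim (factmod_repr mod2) (triv_repr F G)])]) :
  ~ mx_irreducible (tens_repr rU rV).
Proof.
move=> irrUV; have sPG := proper_sub ltPG.
have [ZU cU nsU] := exists_nonscalar_res_cent EndU.
have [ZV cV nsV] := exists_nonscalar_res_cent EndV.
have [pairVU pairUV] := tens_irr_pairing_scalar sPG cU cV irrUV.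
have [xU nzU /andP[xkerU xaugU]] := ker_meets_aug sPG irrV cV nsV pairUV.
have [xV nzV /andP[xkerV _]] := ker_meets_aug sPG irrU cU nsU pairVU.
have naugU := aug_not_sub_ker_conj_hom sPG irrU cU nsU.
have naugV := aug_not_sub_ker_conj_hom sPG irrV cV nsV.
have modU := ker_conj_hom_module sPG cU; have modV := ker_conj_hom_module sPG cV.
case: hW => a [rA [irrA ntA [splitW | [uniW]]]].
  by case/negP: naugU; exact: (split_aug_sub_module sPG irrA splitW modU nzU xkerU xaugU).
case=> M1 [M2 [mod1 [mod2 [sM12 triv1 simA triv2]]]].
have small_ker := small_submod_one sPG irrA uniW sM12 triv1 simA triv2.
apply: (uniserial_scalar_pairing_false sPG irrA ntA uniW sM12 triv1 simA triv2
         cU pairVU).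
  exact: small_ker modV naugV nzV xkerV.
exact: small_ker modU naugU nzU xkerU.
Qed.
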